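(* Assume $p>2q$. For every integer $n\in\mathbb{N}$ there exists an integer $m$ such that $m$ is reachable from $n$ in $\mathcal{T}_{p/q}$ but not reachable from $n$ in $\widehat{\mathcal{T}_{p/q}}$.
   Context: Let $p>q>1$ be coprime integers, $A_p=\{0,\dots,p-1\}$ and $B=\{p-(2q-1),\dots,p-1\}$. For $n\in\mathbb{N}$ and $a\in\mathbb{Z}$, let $\tau(n,a)=\frac{np+a}{q}$, defined only when $q$ divides $np+a$. Let $\mathcal{T}_{p/q}$ (resp. $\widehat{\mathcal{T}_{p/q}}$) be the deterministic automaton with state set $\mathbb{N}$, alphabet $A_p$ (resp. $B$), and transitions $n\xrightarrow{a}\tau(n,a)$ for $a$ in the alphabet with $\tau(n,a)$ defined. A state $m$ is reachable from $n$ if there is a path (of transitions) from $n$ to $m$. *)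

From mathcomp Require Import all_boot.
From Stdlib Require Import Relations.

Set Implicit Arguments. Unset Strict Implicit. Unset Printing Implicit Defensive.

Definition alphA (p : nat) (a : nat) : bool := a < p.

(* Alphabet B = {p - (2q-1), ..., p-1}; used only when p > 2q, so all
   letters are natural numbers. *)
Definition alphB (p q : nat) (a : nat) : bool := (p - (2 * q - 1) <= a) && (a < p).

Definition trans (p q : nat) (alph : nat -> bool) (n m : nat) : Prop :=
  exists a, [/\ alph a, q %| n * p + a & m = (n * p + a) %/ q].

Definition reachable (p q : nat) (alph : nat -> bool) (n m : nat) : Prop :=
  clos_refl_trans nat (trans p q alph) n m.

Definition reachT (p q : nat) := reachable p q (alphA p).
Definition reachThat (p q : nat) := reachable p q (alphB p q).

(* Every m has the A-predecessor q m / p (with letter q m mod p).  Since p > 2q, the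
   predecessors of the k+2 consecutive integers starting at L p / q + 1 all lie among
   the k+1 integers L, ..., L+k.  Hence the states reachable from n in T_{p/q} contain
   arbitrarily long blocks of consecutive integers beyond n, in particular some multiple
   c q > n, whence c p is reachable with the letter 0.  In the variant automaton c p has
   no predecessor at all: q c p = z p + a forces p | a, which no letter of B allows, so
   c p is reachable only from itself. *)
From mathcomp Require Import all_boot.
From Stdlib Require Import Relations Lia.
From mathcomp Require Import zify.

Set Implicit Arguments.
Unset Strict Implicit.

Lemma clos_rt_no_pred (A : Type) (R : relation A) (n m : A) :
  (forall z, ~ R z m) -> clos_refl_trans A R n m -> n = m.
Proof.
move=> no_pred nm.
by case: (clos_rt_rtn1 _ _ _ _ nm) no_pred => [|z m' zm _ /(_ z)].
Qed.

Lemma transA_div (p q m : nat) : 0 < p -> 0 < q ->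
  trans p q (alphA p) (q * m %/ p) m.
Proof.
move=> p_gt0 q_gt0; have qm_eq : q * m %/ p * p + q * m %% p = q * m by rewrite -divn_eq.
exists (q * m %% p); split.
- by rewrite /alphA ltn_mod.
- by rewrite qm_eq dvdn_mulr.
- by rewrite qm_eq mulKn.
Qed.

Lemma not_transB_mulp (p q z c : nat) : 2 * q <= p ->
  ~ trans p q (alphB p q) z (c * p).
Proof.
move=> le2qp [a [/andP [a_ge a_lt] dvd_q cp_eq]].
have qcp_eq : q * c * p = z * p + a by rewrite -mulnA cp_eq mulnC divnK.
have a0 : a = 0 by rewrite -(modn_small a_lt) -(modnMDl z) -qcp_eq modnMl.
lia.
Qed.

Section Blocks.

Variables p q : nat.
Hypothesis q_gt0 : 0 < q.
Hypothesis lt2qp : 2 * q < p.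

Lemma div_block_shift (L k j : nat) : j <= k.+1 ->
  L <= q * ((L * p %/ q).+1 + j) %/ p <= L + k.
Proof.
move=> le_jk; have p_gt0 : 0 < p by lia.
have lo : L * p < q * (L * p %/ q).+1 by rewrite [q * _]mulnC ltn_ceil.
have hi : q * (L * p %/ q) <= L * p by rewrite [q * _]mulnC leq_divM.
apply/andP; split; [rewrite leq_divRL // | rewrite -ltnS ltn_divLR //]; nia.
Qed.

Lemma reachT_block_grow (n L k : nat) :
  (forall j, j <= k -> reachT p q n (L + j)) ->
  forall j, j <= k.+1 -> reachT p q n ((L * p %/ q).+1 + j).
Proof.
move=> block j le_jk; have p_gt0 : 0 < p by lia.
set m := _ + j; have /andP [lo hi] := div_block_shift L le_jk.
apply: (rt_trans _ _ _ (q * m %/ p)); last exact/rt_step/transA_div.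
by rewrite -(subnKC lo); apply: block; lia.
Qed.

Lemma reachT_block (n k : nat) :
  exists L, n <= L /\ forall j, j <= k -> reachT p q n (L + j).
Proof.
elim: k => [|k [L [le_nL block]]].
  by exists n; split => // j; rewrite leqn0 addnC => /eqP ->; apply: rt_refl.
exists (L * p %/ q).+1; split; last exact: reachT_block_grow block.
by apply: leq_trans le_nL _; rewrite ltnW // ltnS leq_divRL //; nia.
Qed.

Lemma reachT_mulq (n : nat) : exists c, n < c * q /\ reachT p q n (c * q).
Proof.
have [L [le_nL block]] := reachT_block n q.
exists (L %/ q).+1; split; first by apply: leq_trans (ltn_ceil _ _).
have := ltn_ceil L q_gt0; have := leq_divM L q => lo hi.
by rewrite -(subnKC (ltnW hi)); apply: block; rewrite mulSn; lia.
Qed.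

End Blocks.

Theorem mainTheorem13 (p q : nat) (hq : 1 < q) (hqp : q < p) (hcop : coprime p q)
  (hp2q : 2 * q < p) :
  forall n : nat, exists m : nat, reachT p q n m /\ ~ reachThat p q n m.
Proof.
move=> n; have q_gt0 : 0 < q by lia.
have [c [lt_n_cq reach_cq]] := reachT_mulq q_gt0 hp2q n.
exists (c * p); split.
  apply: (rt_trans _ _ _ _ _ reach_cq).
  have -> : c * q = q * (c * p) %/ p by rewrite mulnA mulnK //; lia.
  by apply/rt_step/transA_div; lia.
move=> /(clos_rt_no_pred (fun z => @not_transB_mulp p q z c (ltnW hp2q))).
nia.
Qed.
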